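(* If $w\in\mathbb{R}^n$, $w\ge0$, is strongly bilevel feasible, then $w$ has exactly one bilevel feasible decomposition.
   Context: Multi-commodity network pricing setting: $G=(\mathcal{V},\mathcal{A})$ directed graph with arc costs $c\ge0$, nonempty tolled arc set $\mathcal{A}_1\subsetneq\mathcal{A}$, $n=|\mathcal{A}_1|$, $N$ node–arc incidence matrix; finite set $\mathcal{K}$ of commodities, commodity $k$ having origin $o^k$ and destination $d^k$ connected by a path of arcs not in $\mathcal{A}_1$; $b^k_{o^k}=1$, $b^k_{d^k}=-1$, other entries $0$; $\mathcal{X}^k=\{x\in\mathbb{R}^{\mathcal{A}}: Nx=b^k,\ x\ge0\}$; $x_{\mathcal{A}_1}$ is the restriction of $x$ to $\mathcal{A}_1$. For $t\in\mathbb{R}^n$ let $f^k(t)=\min\{c^\top x+t^\top x_{\mathcal{A}_1}: x\in\mathcal{X}^k\}$ if $t\ge0$, $-\infty$ otherwise; $f=\sum_k f^k$; $g^k(w)=\sup_t\{f^k(t)-t^\top w\}$, $g(w)=\sup_t\{f(t)-t^\top w\}$. A vector $w\ge0$ is strongly bilevel feasible if $\{w\}$ is the projection onto $w$-space of a face of $\operatorname{epi}(g)$ whose affine hull's direction space does not contain $(0,1)$ (equivalently $\{(w,g(w))\}$ is a face of $\operatorname{epi}(g)$). A decomposition of $w$ is a tuple $(w^k)_{k\in\mathcal{K}}$ of vectors $w^k\ge0$ with $\sum_k w^k=w$; it is bilevel feasible if $g(w)=\sum_k g^k(w^k)$. *)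

From HB Require Import structures.
From mathcomp Require Import all_boot all_order all_algebra.
From mathcomp Require Import boolp classical_sets reals constructive_ereal ereal.

Set Implicit Arguments. Unset Strict Implicit. Unset Printing Implicit Defensive.
Import Order.TTheory GRing.Theory Num.Theory.
Local Open Scope ring_scope.
Local Open Scope classical_set_scope.

Section Pricing.
Variable R : realType.
Variables (V A : finType) (tl hd : A -> V).

Fixpoint walk (u v : V) (p : seq A) : bool :=
  if p is a :: p' then (tl a == u) && walk (hd a) v p' else u == v.

Definition incid (v : V) (a : A) : R := (tl a == v)%:R - (hd a == v)%:R.

Definition bvec (o d : V) (v : V) : R := (v == o)%:R - (v == d)%:R.

Definition Xset (o d : V) : set (A -> R) :=
  [set x | (forall v, \sum_(a : A) incid v a * x a = bvec o d v) /\
           (forall a, 0 <= x a)].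

Variable A1 : {set A}.
(* index type of the tolled arcs: R^n is modelled as tolled -> R, n = #|A1| *)
Definition tolled := {a : A | a \in A1}.

Definition tdot (t : tolled -> R) (x : A -> R) : R := \sum_(i : tolled) t i * x (val i).
Definition vdot (t w : tolled -> R) : R := \sum_(i : tolled) t i * w i.

Variable c : A -> R.

Definition fk (o d : V) (t : tolled -> R) : \bar R :=
  if [forall i, 0 <= t i]
  then ereal_inf [set ((\sum_(a : A) c a * x a) + tdot t x)%:E | x in Xset o d]
  else -oo%E.

Definition gk (o d : V) (w : tolled -> R) : \bar R :=
  ereal_sup [set (fk o d t - (vdot t w)%:E)%E | t in [set: tolled -> R]].

Variables (K : finType) (o d : K -> V).

Definition ftot (t : tolled -> R) : \bar R := (\sum_(k : K) fk (o k) (d k) t)%E.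

Definition gtot (w : tolled -> R) : \bar R :=
  ereal_sup [set (ftot t - (vdot t w)%:E)%E | t in [set: tolled -> R]].

Definition point := ((tolled -> R) * R)%type.

Definition epi_g : set point := [set p | (gtot p.1 <= p.2%:E)%E].

Definition cvx (l : R) (p q : point) : point :=
  (fun j => l * p.1 j + (1 - l) * q.1 j, l * p.2 + (1 - l) * q.2).

Definition is_face (C F : set point) : Prop :=
  F `<=` C /\
  (forall p q l, F p -> F q -> 0 <= l <= 1 -> F (cvx l p q)) /\
  (forall p q l, C p -> C q -> 0 < l < 1 -> F (cvx l p q) -> F p /\ F q).

(* v lies in the direction space of aff(F), i.e. in span { p - q : p, q in F } *)
Definition in_dir_space (F : set point) (v : point) : Prop :=
  exists (m : nat) (lam : 'I_m -> R) (p q : 'I_m -> point),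
    (forall i, F (p i) /\ F (q i)) /\
    (forall j, v.1 j = \sum_(i < m) lam i * ((p i).1 j - (q i).1 j)) /\
    v.2 = \sum_(i < m) lam i * ((p i).2 - (q i).2).

Definition e_vert : point := (fun _ => 0, 1).

Definition strongly_bilevel_feasible (w : tolled -> R) : Prop :=
  exists F : set point,
    is_face epi_g F /\
    (exists p, F p) /\ (forall p, F p -> p.1 = w) /\
    ~ in_dir_space F e_vert.

Definition bilevel_feasible_decomposition (w : tolled -> R) (W : K -> tolled -> R) : Prop :=
  (forall k i, 0 <= W k i) /\
  (forall i, \sum_(k : K) W k i = w i) /\
  gtot w = (\sum_(k : K) gk (o k) (d k) (W k))%E.

End Pricing.

From HB Require Import structures.
From mathcomp Require Import all_boot all_order all_algebra.
From mathcomp Require Import boolp classical_sets reals constructive_ereal ereal.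
From mathcomp Require Import ring lra.
Import Order.TTheory GRing.Theory Num.Theory.
Local Open Scope ring_scope.
Set Implicit Arguments. Unset Strict Implicit. Unset Printing Implicit Defensive.

(* Let F be the face of epi g that witnesses strong bilevel feasibility. F lies over w
   and contains some (w, s) with s >= g(w); as (w, s) is the midpoint of (w, g(w)) and
   (w, 2s - g(w)), the face property puts (w, g(w)) in F, so (w, g(w)) is the midpoint
   of no segment of epi g whose ends lie off the vertical line through w.
   Uniqueness: g is below the value sum_k g^k(W^k) of every decomposition, so
   exchanging the k-th parts of two bilevel feasible decompositions W and W' gives
   points of epi g over w + (W'^k - W^k) and w - (W'^k - W^k) with midpoint (w, g(w));
   hence W'^k = W^k.
   Existence is linear programming duality: if g(w) is finite, Farkas' lemma (proved by
   Fourier-Motzkin elimination) yields flows y^k in X^k loading the tolled arcs by at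
   most w and costing at most g(w) in total; giving the unused capacity to a single
   commodity yields a decomposition of value at most g(w). *)

Lemma sum_delta (R : pzSemiRingType) (T : finType) (t0 : T) (F : T -> R) :
  \sum_t (t == t0)%:R * F t = F t0.
Proof.
rewrite (bigD1 t0) //= eqxx mul1r big1 ?addr0 // => t /negbTE->.
by rewrite mul0r.
Qed.

Lemma sum_lincomb_mul (R : pzSemiRingType) (T : finType) (s t : R) (p q y : T -> R) :
  \sum_i (s * p i + t * q i) * y i = s * \sum_i p i * y i + t * \sum_i q i * y i.
Proof. by rewrite !mulr_sumr -big_split; apply: eq_bigr => i _; rewrite mulrDl !mulrA. Qed.

Lemma sum_prod (R : nmodType) (I J : finType) (F : I * J -> R) :
  \sum_ij F ij = \sum_i \sum_j F (i, j).
Proof. by rewrite pair_big; apply: eq_bigr => -[]. Qed.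

Lemma sum_replace_at (R : zmodType) (T : finType) (t0 : T) (x : R) (F : T -> R) :
  \sum_t (if t == t0 then x else F t) = \sum_t F t - F t0 + x.
Proof.
rewrite [in RHS](bigD1 t0) //= [F t0 + _]addrC addrK (bigD1 t0) //= eqxx addrC.
by congr (_ + _); apply: eq_bigr => t /negbTE->.
Qed.

Lemma exists_between (R : realDomainType) (X Y : finType) (lo : X -> R) (hi : Y -> R) :
  (forall x y, lo x <= hi y) -> exists v, (forall x, lo x <= v) /\ (forall y, v <= hi y).
Proof.
move=> lo_hi; case: (pickP X) => [x0 _|noX].
  exists (lo [arg max_(x > x0) lo x]%O).
  by case: arg_maxP => // x _ x_max; split=> [x'|y]; [exact: x_max|exact: lo_hi].
case: (pickP Y) => [y0 _|noY].
  exists (hi [arg min_(y < y0) hi y]%O).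
  by case: arg_minP => // y _ y_min; split=> [x|y']; [exact: lo_hi|exact: y_min].
by exists 0; split=> [x|y]; [have := noX x|have := noY y].
Qed.

Section Farkas.
Variables (R : realFieldType) (I : finType).

Definition sat (y : I -> R) (r : (I -> R) * R) := \sum_i r.1 i * y i <= r.2.

Definition lincomb (s t : R) (p q : (I -> R) * R) : (I -> R) * R :=
  (fun i => s * p.1 i + t * q.1 i, s * p.2 + t * q.2).

Inductive derivable (J : finType) (S : J -> (I -> R) * R) : (I -> R) * R -> Prop :=
| derivable_row j : derivable S (S j)
| derivable_lincomb s t p q : 0 <= s -> 0 <= t ->
    derivable S p -> derivable S q -> derivable S (lincomb s t p q).

Lemma derivable_trans (J J' : finType) (S : J -> (I -> R) * R) (S' : J' -> (I -> R) * R) :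
  (forall j', derivable S (S' j')) -> forall r, derivable S' r -> derivable S r.
Proof. by move=> S'S r; elim=> [j'|*]; [exact: S'S|exact: derivable_lincomb]. Qed.

Section Elimination.
Variables (m : I) (J : finType) (S : J -> (I -> R) * R).

Definition fm_index :=
  ({j | (S j).1 m == 0} + {j | 0 < (S j).1 m} * {j | (S j).1 m < 0})%type.

(* Each pair of rows with opposite signs at [m] is combined so as to cancel [m]. *)
Definition fm_system (j : fm_index) : (I -> R) * R :=
  match j with
  | inl j0 => S (val j0)
  | inr (p, q) => lincomb (- (S (val q)).1 m) ((S (val p)).1 m) (S (val p)) (S (val q))
  end.

Lemma fm_system_derivable j : derivable S (fm_system j).
Proof.
case: j => [j0|[p q]] /=; first exact: derivable_row.
apply: derivable_lincomb; try exact: derivable_row.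
  by rewrite oppr_ge0 ltW // (valP q).
by rewrite ltW // (valP p).
Qed.

Lemma fm_system_coef_m j : (fm_system j).1 m = 0.
Proof. by case: j => [j0|[p q]] /=; [exact/eqP/(valP j0)|rewrite mulNr mulrC addNr]. Qed.

Lemma fm_system_coef i : (forall j, (S j).1 i = 0) -> forall j, (fm_system j).1 i = 0.
Proof. by move=> Si0 [j0|[p q]] /=; rewrite ?Si0 ?mulr0 ?addr0. Qed.

Definition update (y : I -> R) (v : R) (i : I) := if i == m then v else y i.

Lemma fm_system_sat y : (forall j, sat y (fm_system j)) ->
  exists v, forall j, sat (update y v) (S j).
Proof.
move=> y_sat.
pose rest (r : (I -> R) * R) := \sum_(i | i != m) r.1 i * y i.
have dot_update r v : \sum_i r.1 i * update y v i = r.1 m * v + rest r.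
  rewrite (bigD1 m) //= /update eqxx; congr (_ + _).
  by apply: eq_bigr => i /negbTE ->.
have dot_y r : \sum_i r.1 i * y i = r.1 m * y m + rest r by rewrite (bigD1 m).
pose lo (q : {j | (S j).1 m < 0}) := ((S (val q)).2 - rest (S (val q))) / (S (val q)).1 m.
pose hi (p : {j | 0 < (S j).1 m}) := ((S (val p)).2 - rest (S (val p))) / (S (val p)).1 m.
have lo_hi q p : lo q <= hi p.
  have := y_sat (inr (p, q)); rewrite /sat /= sum_lincomb_mul !dot_y /lo /hi.
  move: (valP q) (valP p) => /=.
  set a := (S (val q)).1 m; set b := (S (val p)).1 m => qm pm.
  rewrite ler_pdivlMr // mulrAC ler_ndivrMr //; nra.
have [v [lo_v v_hi]] := exists_between lo_hi.
exists v => j; rewrite /sat dot_update.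
case: (ltgtP ((S j).1 m) 0) => Sjm.
- by have := lo_v (exist _ j Sjm); rewrite /lo /= ler_ndivrMr // mulrC lerBrDr.
- by have := v_hi (exist _ j Sjm); rewrite /hi /= ler_pdivlMr // mulrC lerBrDr.
- have := y_sat (inl (exist _ j (introT eqP Sjm))).
  by rewrite /sat /= dot_y Sjm !mul0r.
Qed.

End Elimination.

Lemma fourier_motzkin n (s : {set I}) (J : finType) (S : J -> (I -> R) * R) :
  #|s| = n -> (forall j i, i \notin s -> (S j).1 i = 0) ->
  ~ (exists y, forall j, sat y (S j)) ->
  exists2 b, b < 0 & derivable S ((fun=> 0), b).
Proof.
elim: n s J S => [|n IHn] s J S s_n S_s infeasible.
  have [j Sj] : exists j, (S j).2 < 0.
    apply: contrapT => nonneg; apply: infeasible; exists (fun=> 0) => j.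
    rewrite /sat big1 => [|i _]; last by rewrite mulr0.
    by rewrite leNgt; apply/negP => Sj; apply: nonneg; exists j.
  exists (S j).2 => //.
  have -> : (fun=> 0) = (S j).1 by apply: funext => i; rewrite S_s // (cards0_eq s_n) inE.
  by rewrite -surjective_pairing; apply: derivable_row.
have [m ms] : exists m, m \in s by apply/set0Pn; rewrite -card_gt0 s_n.
have [|i|[y y_sat]|b b0 Sb] := IHn (s :\ m) _ (@fm_system m _ S).
- by move: s_n; rewrite (cardsD1 m s) ms => -[].
- move=> j; rewrite in_setD1 negb_and negbK => /orP[/eqP->|i_s].
    exact: fm_system_coef_m.
  by apply: fm_system_coef => j0; apply: S_s.
- by have [v v_sat] := fm_system_sat y_sat; case: infeasible; exists (update m y v).
- by exists b => //; apply: derivable_trans Sb; apply: fm_system_derivable.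
Qed.

Theorem farkas (J : finType) (S : J -> (I -> R) * R) :
  ~ (exists y, forall j, sat y (S j)) ->
  exists2 b, b < 0 & derivable S ((fun=> 0), b).
Proof. by apply: (@fourier_motzkin _ [set: I]) => // j i; rewrite inE. Qed.

End Farkas.

Section Commodity.
Variables (R : realType) (V A : finType) (tl hd : A -> V) (A1 : {set A}) (c : A -> R).
Hypothesis c_ge0 : forall a, 0 <= c a.
Local Notation tol := (tolled A1).
Local Notation cost x := (\sum_a c a * x a).
Local Notation X := (Xset tl hd).
Local Notation f := (@fk R V A tl hd A1 c).
Local Notation gk := (@gk R V A tl hd A1 c).

Definition walk_flow (p : seq A) (a : A) : R := (count_mem a p)%:R.

Lemma walk_flow_feasible u v p : walk tl hd u v p -> X u v (walk_flow p).
Proof.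
elim: p u => [|a0 p IHp] u /=.
  move/eqP=> <-; split=> [v'|a]; last by rewrite ler0n.
  by rewrite /bvec subrr big1 // => a _; rewrite mulr0.
move=> /andP[/eqP tl_a0 walk_p]; have [flow_p _] := IHp _ walk_p.
split=> [v'|a]; last by rewrite ler0n.
have -> : \sum_a incid R tl hd v' a * walk_flow (a0 :: p) a =
          incid R tl hd v' a0 + \sum_a incid R tl hd v' a * walk_flow p a.
  rewrite /walk_flow /=; under eq_bigr do rewrite natrD mulrDr.
  rewrite big_split /= -(sum_delta a0 (incid R tl hd v')).
  by congr (_ + _); apply: eq_bigr => a _; rewrite mulrC eq_sym.
by rewrite flow_p /incid /bvec tl_a0 [hd a0 == _]eq_sym [u == _]eq_sym addrA subrK.
Qed.

Lemma tdot_walk_flow (t : tol -> R) p :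
  all (fun a => a \notin A1) p -> tdot t (walk_flow p) = 0.
Proof.
move=> untolled; rewrite /tdot big1 // => i _.
rewrite /walk_flow; suff -> : count_mem (val i) p = 0%N by rewrite mulr0.
by apply/count_memPn/negP => /(allP untolled); rewrite /= (valP i).
Qed.

Lemma fk_ge u v (t : tol -> R) (m : R) : (forall i, 0 <= t i) ->
  (forall x, X u v x -> m <= cost x + tdot t x) -> (m%:E <= f u v t)%E.
Proof.
move=> t_ge0 m_le; rewrite /fk; have /forallP-> := t_ge0.
by apply/ereal_infP => _ [x Xx <-]; rewrite lee_fin; apply: m_le.
Qed.

Lemma tdot0l (x : A -> R) : tdot (fun _ : tol => 0) x = 0 :> R.
Proof. by rewrite /tdot big1 // => i _; rewrite mul0r. Qed.

Lemma vdot0l (w : tol -> R) : vdot (fun=> 0) w = 0 :> R.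
Proof. by rewrite /vdot big1 // => i _; rewrite mul0r. Qed.

Lemma vdotZl (s : R) (t w : tol -> R) : vdot (fun i => s * t i) w = s * vdot t w.
Proof. by rewrite /vdot mulr_sumr; apply: eq_bigr => i _; rewrite mulrA. Qed.

Lemma tdotZl (s : R) (t : tol -> R) (x : A -> R) : tdot (fun i => s * t i) x = s * tdot t x.
Proof. by rewrite /tdot mulr_sumr; apply: eq_bigr => i _; rewrite mulrA. Qed.

Lemma fk0_ge0 u v : (0 <= f u v (fun=> 0%R))%E.
Proof.
apply: fk_ge => // x [_ x_ge0]; rewrite tdot0l addr0.
by apply: sumr_ge0 => a _; apply: mulr_ge0.
Qed.

Lemma gk_ge0 u v (W : tol -> R) : (0 <= gk u v W)%E.
Proof.
apply: le_trans (fk0_ge0 u v) _; apply: ereal_sup_ubound; exists (fun=> 0) => //.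
by rewrite vdot0l sube0.
Qed.

Lemma gk_le_cost u v (W : tol -> R) x : X u v x -> (forall i, x (val i) <= W i) ->
  (gk u v W <= (cost x)%:E)%E.
Proof.
move=> Xx x_le_W; apply/ereal_supP => _ [t _ <-]; rewrite /fk.
case: ifP => [/forallP t_ge0|_]; last by rewrite leNye.
have fx : (ereal_inf [set (cost y + tdot t y)%:E | y in X u v] <= (cost x + tdot t x)%:E)%E.
  by apply: ereal_inf_lbound; exists x.
apply: le_trans (leeB fx (lexx (vdot t W)%:E)) _.
rewrite -EFinB lee_fin lerBlDr lerD2l.
by apply: ler_sum => i _; apply: ler_wpM2l.
Qed.

End Commodity.

Section Faces.
Variables (R : realType) (A : finType) (A1 : {set A}).

Lemma cvx_half (p q : (tolled A1 -> R) * R) :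
  cvx (1 / 2) p q = ((fun j => (p.1 j + q.1 j) / 2), (p.2 + q.2) / 2).
Proof. by rewrite /cvx; congr pair; [apply: funext => j|]; field. Qed.

Lemma face_midpoint (C F : set ((tolled A1 -> R) * R)) p q :
  is_face C F -> C p -> C q -> F (cvx (1 / 2) p q) -> F p.
Proof.
by move=> [_ [_ F_face]] Cp Cq /(F_face _ _ _ Cp Cq) [|//]; apply/andP; split; lra.
Qed.

End Faces.

Section Network.
Variables (R : realType) (V A : finType) (tl hd : A -> V) (A1 : {set A}) (c : A -> R).
Variables (K : finType) (o d : K -> V).
Hypothesis c_ge0 : forall a, 0 <= c a.
Local Notation tol := (tolled A1).
Local Notation cost x := (\sum_a c a * x a).
Local Notation X k := (Xset tl hd (o k) (d k)).
Local Notation f k := (@fk R V A tl hd A1 c (o k) (d k)).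
Local Notation gk k := (@gk R V A tl hd A1 c (o k) (d k)).
Local Notation ftot := (@ftot R V A tl hd A1 c K o d).
Local Notation g := (@gtot R V A tl hd A1 c K o d).

Lemma gtot_ge (w t : tol -> R) : (ftot t - (vdot t w)%:E <= g w)%E.
Proof. by apply: ereal_sup_ubound; exists t. Qed.

Lemma gtot_ge0 w : (0 <= g w)%E.
Proof.
apply: le_trans (gtot_ge w (fun=> 0)); rewrite vdot0l sube0.
by apply: sume_ge0 => k _; apply: fk0_ge0.
Qed.

Lemma gtot_le_sum_gk (w : tol -> R) (W : K -> tol -> R) :
  (forall i, \sum_k W k i = w i) -> (g w <= \sum_k gk k (W k))%E.
Proof.
move=> W_w; apply/ereal_supP => _ [t _ <-].
have -> : vdot t w = \sum_k vdot t (W k).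
  by rewrite /vdot exchange_big; apply: eq_bigr => i _; rewrite -W_w mulr_sumr.
rewrite /ftot -EFinN -sumrN -sumEFin -big_split /=.
by apply: lee_sum => k _; rewrite EFinN; apply: ereal_sup_ubound; exists t.
Qed.

Lemma gtot_no_commodity (w : tol -> R) (gw : R) : (K -> False) ->
  (forall i, 0 <= w i) -> g w = gw%:E -> forall i, w i = 0.
Proof.
move=> noK w_ge0 gwE i; apply/le_anti; rewrite w_ge0 andbT leNgt; apply/negP => wi_gt0.
(* with no commodity f = 0, so this negative toll on [i] forces g(w) >= gw + 1 *)
pose t j := - ((j == i)%:R * ((gw + 1) / w i)).
have tw : vdot t w = - (gw + 1).
  rewrite /vdot /t; under eq_bigr do rewrite mulNr -mulrA.
  by rewrite sumrN sum_delta divfK ?gt_eqF.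
have := gtot_ge w t; rewrite gwE /ftot big1 => [|k]; last by case: (noK k).
by rewrite tw sub0e -EFinN opprK lee_fin gerDl ler10.
Qed.

Section FlowSystem.
Variables (w : tol -> R) (gw : R).

(* The variables [y (k, a)] are the flows of the commodities on the arcs; the rows
   are flow conservation (as two opposite inequalities, [s] being the sign),
   nonnegativity, the capacities [w] of the tolled arcs and the cost bound [gw]. *)
Definition flow_row := (K * V * bool + K * A + tol + unit)%type.

Definition flow_system (j : flow_row) : (K * A -> R) * R :=
  match j with
  | inl (inl (inl (k, v, s))) =>
      (fun ka => (-1) ^+ s * ((ka.1 == k)%:R * incid R tl hd v ka.2),
       (-1) ^+ s * bvec R (o k) (d k) v)
  | inl (inl (inr (k, a))) => (fun ka => - (ka == (k, a))%:R, 0)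
  | inl (inr i) => (fun ka => (ka.2 == val i)%:R, w i)
  | inr _ => (fun ka => c ka.2, gw)
  end.

Lemma sum_commodity (r : R) k (F : A -> R) (y : K * A -> R) :
  \sum_ka (r * ((ka.1 == k)%:R * F ka.2)) * y ka = r * \sum_a F a * y (k, a).
Proof.
rewrite sum_prod -(sum_delta k (fun k' => \sum_a F a * y (k', a))) mulr_sumr.
apply: eq_bigr => k' _; rewrite !mulr_sumr; apply: eq_bigr => a _.
by rewrite !mulrA [r * _]mulrC.
Qed.

Lemma sum_arc a0 (y : K * A -> R) : \sum_ka (ka.2 == a0)%:R * y ka = \sum_k y (k, a0).
Proof. by rewrite sum_prod; apply: eq_bigr => k _; apply: (sum_delta a0 (fun a => y (k, a))). Qed.

Lemma flow_system_sat y : (forall j, sat y (flow_system j)) ->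
  [/\ forall k, X k (fun a => y (k, a)),
      forall i, \sum_k y (k, val i) <= w i &
      \sum_k cost (fun a => y (k, a)) <= gw].
Proof.
move=> y_sat; split.
- move=> k; split=> [v|a].
    have := y_sat (inl (inl (inl (k, v, false)))); have := y_sat (inl (inl (inl (k, v, true)))).
    rewrite /sat /= !sum_commodity expr1 expr0 !mulN1r !mul1r lerN2 => ge le.
    exact/le_anti/andP.
  have := y_sat (inl (inl (inr (k, a)))); rewrite /sat /=.
  by under eq_bigr do rewrite mulNr; rewrite sumrN sum_delta oppr_le0.
- by move=> i; have := y_sat (inl (inr i)); rewrite /sat sum_arc.
- by have := y_sat (inr tt); rewrite /sat /= sum_prod.
Qed.

(* [r] is dominated, commodity by commodity, by the conservation constraints ([rho]),
   the capacities ([tau]) and the cost bound ([th]): a weak-duality certificate. *)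
Definition dual_certified (r : (K * A -> R) * R) : Prop :=
  exists (rho : K -> R) (tau : tol -> R) (th : R),
  [/\ forall i, 0 <= tau i, 0 <= th, r.2 = \sum_k rho k + vdot tau w + th * gw &
      forall k x, X k x -> \sum_a r.1 (k, a) * x a <= rho k + tdot tau x + th * cost x].

Lemma dual_certified_lincomb s t p q : 0 <= s -> 0 <= t ->
  dual_certified p -> dual_certified q -> dual_certified (lincomb s t p q).
Proof.
move=> s0 t0 [rp [tp [hp [tp0 hp0 Ep Bp]]]] [rq [tq [hq [tq0 hq0 Eq Bq]]]].
exists (fun k => s * rp k + t * rq k), (fun i => s * tp i + t * tq i), (s * hp + t * hq).
split.
- by move=> i; rewrite addr_ge0 // mulr_ge0.
- by rewrite addr_ge0 // mulr_ge0.
- by rewrite /= Ep Eq big_split /= -!mulr_sumr /vdot sum_lincomb_mul; ring.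
- move=> k x Xx; rewrite /= sum_lincomb_mul.
  apply: le_trans (lerD (ler_wpM2l s0 (Bp k x Xx)) (ler_wpM2l t0 (Bq k x Xx))) _.
  by rewrite /tdot sum_lincomb_mul le_eqVlt; apply/orP; left; apply/eqP; ring.
Qed.

Lemma flow_system_certified j : dual_certified (flow_system j).
Proof.
case: j => [[[[[k v] s]|[k a]]|i]|[]].
- exists (fun k' => (-1) ^+ s * ((k' == k)%:R * bvec R (o k') (d k') v)), (fun=> 0), 0.
  split=> //; first by rewrite -mulr_sumr sum_delta vdot0l mul0r !addr0.
  move=> k' x [x_flow _]; rewrite tdot0l mul0r !addr0 /=.
  by under eq_bigr do rewrite -!mulrA; rewrite -!mulr_sumr x_flow.
- exists (fun=> 0), (fun=> 0), 0; split=> //; first by rewrite big1 // vdot0l mul0r !addr0.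
  move=> k' x [_ x_ge0]; rewrite tdot0l mul0r !addr0 /=.
  by apply: sumr_le0 => a' _; rewrite mulNr oppr_le0 mulr_ge0.
- exists (fun=> 0), (fun j => (j == i)%:R), 0.
  split=> //; first by rewrite big1 // /vdot sum_delta mul0r addr0 add0r.
  by move=> k x _; rewrite /tdot /= !sum_delta mul0r addr0 add0r.
- exists (fun=> 0), (fun=> 0), 1; split=> //; first by rewrite big1 // vdot0l !add0r mul1r.
  by move=> k x _; rewrite tdot0l mul1r !add0r.
Qed.

Lemma derivable_certified r : derivable flow_system r -> dual_certified r.
Proof. by elim=> [j|*]; [exact: flow_system_certified|exact: dual_certified_lincomb]. Qed.

Hypothesis w_ge0 : forall i, 0 <= w i.
Hypothesis untolled_path : forall k, exists p : seq A,
  walk tl hd (o k) (d k) p && all (fun a => a \notin A1) p.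
Hypothesis gwE : g w = gw%:E.

Lemma dual_certified_ge0 b : dual_certified ((fun=> 0), b) -> 0 <= b.
Proof.
move=> [rho [tau [th [tau_ge0 th_ge0 /= -> bound]]]].
have {}bound k x : X k x -> 0 <= rho k + tdot tau x + th * cost x.
  by move=> Xx; apply: le_trans (bound k x Xx); rewrite big1 // => a _; rewrite mul0r.
have tauw_ge0 : 0 <= vdot tau w by apply: sumr_ge0 => i _; apply: mulr_ge0.
(* If [th = 0], the toll-free walks give [rho >= 0]; otherwise the tolls [tau / th]
   would make g(w) exceed [gw] unless [b >= 0]. *)
have [th0|th_neq0] := eqVneq th 0.
  rewrite th0 mul0r addr0 addr_ge0 // sumr_ge0 // => k _.
  have [p /andP[walk_p untolled]] := untolled_path k.
  by have := bound k _ (walk_flow_feasible R walk_p); rewrite tdot_walk_flow // th0 mul0r !addr0.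
have th_gt0 : 0 < th by rewrite lt_neqAle eq_sym th_neq0.
pose t i := th^-1 * tau i.
have f_ge k : ((- (th^-1 * rho k))%:E <= f k t)%E.
  apply: fk_ge => [i|x Xx]; first by rewrite mulr_ge0 // invr_ge0 ltW.
  rewrite tdotZl -(ler_pM2l th_gt0) mulrDr mulrN !mulrA divff ?gt_eqF // !mul1r.
  by have := bound k x Xx; lra.
have ftot_ge : ((\sum_k - (th^-1 * rho k))%:E <= ftot t)%E.
  by rewrite -sumEFin; apply: lee_sum => k _; apply: f_ge.
have := le_trans (leeB ftot_ge (lexx (vdot t w)%:E)) (gtot_ge w t).
rewrite gwE -EFinB lee_fin vdotZl sumrN -mulr_sumr -(ler_pM2l th_gt0).
by rewrite mulrBr mulrN !mulrA divff ?gt_eqF // !mul1r; lra.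
Qed.

Lemma exists_cheap_flows : exists y : K -> A -> R,
  [/\ forall k, X k (y k), forall i, \sum_k y k (val i) <= w i & \sum_k cost (y k) <= gw].
Proof.
have [[y y_sat]|infeasible] := pselect (exists y, forall j, sat y (flow_system j)).
  by have [? ? ?] := flow_system_sat y_sat; exists (fun k a => y (k, a)).
have [b b_lt0 /derivable_certified/dual_certified_ge0] := farkas infeasible.
by rewrite leNgt b_lt0.
Qed.

End FlowSystem.

Lemma exists_bilevel_feasible_decomposition (w : tol -> R) (gw : R) :
  (forall i, 0 <= w i) ->
  (forall k, exists p : seq A, walk tl hd (o k) (d k) p && all (fun a => a \notin A1) p) ->
  g w = gw%:E -> exists W, bilevel_feasible_decomposition tl hd c o d w W.
Proof.
move=> w_ge0 untolled_path gwE.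
have [k0 _|noK] := pickP K; last first.
  have w0 := gtot_no_commodity (fun k => Bool.diff_true_false (noK k)) w_ge0 gwE.
  have W_w i : \sum_(k : K) 0 = w i by rewrite big1 ?w0.
  exists (fun _ _ => 0); split=> //; split=> //; apply/le_anti/andP; split.
    exact: gtot_le_sum_gk.
  by rewrite big1 ?gtot_ge0 // => k; have := noK k.
have [y [Xy y_w y_gw]] := exists_cheap_flows w_ge0 untolled_path gwE.
pose W k i := y k (val i) + (k == k0)%:R * (w i - \sum_k' y k' (val i)).
have W_w i : \sum_k W k i = w i by rewrite big_split /= sum_delta addrC subrK.
have y_le_W k i : y k (val i) <= W k i by rewrite lerDl mulr_ge0 // subr_ge0.
exists W; split; first by move=> k i; apply: le_trans (y_le_W k i); exact: (Xy k).2.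
split=> //; apply/le_anti/andP; split; first exact: gtot_le_sum_gk.
rewrite gwE; apply: le_trans (_ : \sum_k (cost (y k))%:E <= _)%E.
  by apply: lee_sum => k _; apply: gk_le_cost.
by rewrite sumEFin lee_fin.
Qed.

Definition rigid_point (w : tol -> R) (gw : R) : Prop :=
  forall (u u' : tol -> R) (a b : R), (g u <= a%:E)%E -> (g u' <= b%:E)%E ->
  (forall i, u i + u' i = w i + w i) -> a + b = gw + gw -> forall i, u i = w i.

Lemma strongly_bilevel_feasible_rigid w :
  strongly_bilevel_feasible tl hd c o d w -> exists2 gw, g w = gw%:E & rigid_point w gw.
Proof.
move=> [F [F_face [[p Fp] [F_w _]]]].
have p_epi : (g w <= p.2%:E)%E by rewrite -(F_w _ Fp); exact: F_face.1.
have gw_fin : g w \is a fin_num.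
  by rewrite ge0_fin_numE ?gtot_ge0 // (le_lt_trans p_epi) ?ltry.
exists (fine (g w)); first by rewrite fineK.
set gw := fine (g w); have gwE : g w = gw%:E by rewrite fineK.
have F_wgw : F (w, gw).
  apply: (face_midpoint F_face (q := (w, p.2 * 2 - gw))).
  - by rewrite /epi_g /= gwE.
  - by move: p_epi; rewrite /epi_g /= gwE !lee_fin; lra.
  suff -> : cvx (1 / 2) (w, gw) (w, p.2 * 2 - gw) = p by [].
  rewrite cvx_half [RHS]surjective_pairing (F_w _ Fp) /=.
  by congr pair; [apply: funext => j|]; field.
move=> u u' a b ua u'b uu' ab.
have F_ua : F (u, a).
  apply: (face_midpoint F_face (q := (u', b))) => //.
  rewrite cvx_half (_ : (a + b) / 2 = gw); last by rewrite ab; field.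
  by rewrite (_ : (fun j => _) = w) //; apply: funext => j; rewrite uu'; field.
by move=> i; rewrite -(F_w _ F_ua).
Qed.

Lemma gtot_le_replace (U U' : K -> tol -> R) (GU GU' : K -> R) k :
  (forall j, gk j (U j) = (GU j)%:E) -> (forall j, gk j (U' j) = (GU' j)%:E) ->
  (g (fun i => \sum_j U j i - U k i + U' k i)%R <= (\sum_j GU j - GU k + GU' k)%R%:E)%E.
Proof.
move=> GUE GU'E.
apply: le_trans (gtot_le_sum_gk (W := fun j => if j == k then U' k else U j) _) _.
  by move=> i; under eq_bigr do rewrite if_arg; apply: sum_replace_at.
rewrite -sum_replace_at -sumEFin; apply: lee_sum => j _.
by case: eqP => [->|_]; rewrite ?GUE ?GU'E.
Qed.

Lemma gk_fin_num w gw W : g w = gw%:E -> g w = (\sum_k gk k (W k))%E ->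
  forall k, gk k (W k) \is a fin_num.
Proof.
move=> gwE gW k; rewrite ge0_fin_numE ?gk_ge0 //; apply: le_lt_trans (ltry gw).
by rewrite -gwE gW (bigD1 k) //= leeDl // sume_ge0 // => k' _; apply: gk_ge0.
Qed.

Lemma bilevel_feasible_decomposition_unique w gw W W' : g w = gw%:E -> rigid_point w gw ->
  bilevel_feasible_decomposition tl hd c o d w W ->
  bilevel_feasible_decomposition tl hd c o d w W' -> forall k i, W' k i = W k i.
Proof.
move=> gwE rigid [_ [W_w gW]] [_ [W'_w gW']] k i.
pose G j := fine (gk j (W j)); pose G' j := fine (gk j (W' j)).
have GE j : gk j (W j) = (G j)%:E by rewrite fineK // (gk_fin_num gwE gW).
have G'E j : gk j (W' j) = (G' j)%:E by rewrite fineK // (gk_fin_num gwE gW').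
have sumG : \sum_j G j = gw.
  by apply: EFin_inj; rewrite -sumEFin -gwE gW; apply: eq_bigr => j _; rewrite GE.
have sumG' : \sum_j G' j = gw.
  by apply: EFin_inj; rewrite -sumEFin -gwE gW'; apply: eq_bigr => j _; rewrite G'E.
suff : \sum_j W j i - W k i + W' k i = w i by rewrite W_w; lra.
apply: (rigid _ _ _ _ (gtot_le_replace k GE G'E) (gtot_le_replace k G'E GE)) => [i'|].
  by rewrite W_w W'_w; ring.
by rewrite sumG sumG'; ring.
Qed.

End Network.

Unset Implicit Arguments.

Theorem lemma7 (R : realType) (V A : finType) (tl hd : A -> V)
  (A1 : {set A}) (c : A -> R) (K : finType) (o d : K -> V)
  (hc : forall a, 0 <= c a)
  (hA1 : A1 != finset.set0) (hA1p : A1 != [set: A])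
  (hod : forall k, o k != d k)
  (hpath : forall k, exists p : seq A,
      walk tl hd (o k) (d k) p && all (fun a => a \notin A1) p)
  (w : tolled A1 -> R) (hw : forall i, 0 <= w i) :
  strongly_bilevel_feasible tl hd c o d w ->
  exists W : K -> tolled A1 -> R,
    bilevel_feasible_decomposition tl hd c o d w W /\
    forall W' : K -> tolled A1 -> R,
      bilevel_feasible_decomposition tl hd c o d w W' ->
      forall k i, W' k i = W k i.
Proof.
move=> /(strongly_bilevel_feasible_rigid hc) [gw gwE rigid].
have [W W_bf] := exists_bilevel_feasible_decomposition hc hw hpath gwE.
exists W; split=> // W' W'_bf.
exact: (bilevel_feasible_decomposition_unique hc gwE rigid W_bf W'_bf).
Qed.
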